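(* Let $m$ be an odd positive integer and let $D_{2m}=\langle a,b\mid a^m=b^2=1,\ b^{-1}ab=a^{-1}\rangle$ be the dihedral group of order $2m$. For every prime $p$ dividing $m$ write $m=p^{k_p}m_p$ with $p\nmid m_p$, and let ''$u\in_p\langle v\rangle$'' abbreviate $\bigvee_{j=0}^{p^{k_p}-1}(u=v^j)$. Then the following d-identities form a basis of d-identities of $D_{2m}$ (i.e. they all hold in $D_{2m}$, and every group satisfying all of them is isomorphic to a section of $D_{2m}$): (1) $\omega_{2m}=\bigvee_{0\le i<j\le 2m}(x_i=x_j)$; (2) $(x^2=1)\vee(y^2=1)\vee(xy=yx)$; (3) $(x^2=1)\vee(x^m=1)$; (4) for every prime $p$ dividing $m$: $(x_1^2=1)\vee(x_2^2=1)\vee(x_1^{m_p}\in_p\langle x_2^{m_p}\rangle)\vee(x_2^{m_p}\in_p\langle x_1^{m_p}\rangle)$; (5) $(x_1^m=1)\vee(x_2^m=1)\vee((x_1x_2)^m=1)$.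
   Context: A d-identity (disjunctive identity) is a universally quantified formula $\forall x_1\dots x_k\,[(f_1=1)\vee\dots\vee(f_n=1)]$ with the $f_i$ words in the free group on the variables; $u=v$ abbreviates $uv^{-1}=1$. A group satisfies it if it is true for all assignments of group elements. For a group $G$, $\mathrm{dvar}(G)$ is the class of groups satisfying every d-identity satisfied by $G$; for finite $G$ it is exactly the class of groups isomorphic to sections (quotients of subgroups) of $G$. A set of d-identities is a basis of d-identities of $G$ if all its members hold in $G$ and every group satisfying them lies in $\mathrm{dvar}(G)$. *)

From mathcomp Require Import all_boot fingroup morphism quotient presentation.
Set Implicit Arguments. Unset Strict Implicit. Unset Printing Implicit Defensive.

Record AbsGroup := {
  gcar :> Type;
  gmul : gcar -> gcar -> gcar;
  ginv : gcar -> gcar;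
  gone : gcar;
  gmulA : forall x y z, gmul x (gmul y z) = gmul (gmul x y) z;
  gmul1 : forall x, gmul x gone = x;
  g1mul : forall x, gmul gone x = x;
  gmulV : forall x, gmul x (ginv x) = gone;
  gVmul : forall x, gmul (ginv x) x = gone }.

Section Identities.
Variables (T : Type) (mul : T -> T -> T) (one : T) (dom : T -> Prop).

Definition pw (x : T) (n : nat) : T := iter n (mul x) one.

Definition dId1 (m : nat) : Prop :=
  forall xs : nat -> T, (forall i, i <= m.*2 -> dom (xs i)) ->
  exists i j, i < j /\ j <= m.*2 /\ xs i = xs j.

Definition dId2 : Prop :=
  forall x y, dom x -> dom y ->
  pw x 2 = one \/ pw y 2 = one \/ mul x y = mul y x.

Definition dId3 (m : nat) : Prop :=
  forall x, dom x -> pw x 2 = one \/ pw x m = one.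

Definition in_p (m p : nat) (u v : T) : Prop :=
  exists j, j < p ^ logn p m /\ u = pw v j.

Definition m_p (m p : nat) : nat := m %/ p ^ logn p m.

Definition dId4 (m p : nat) : Prop :=
  forall x1 x2, dom x1 -> dom x2 ->
  pw x1 2 = one \/ pw x2 2 = one \/
  in_p m p (pw x1 (m_p m p)) (pw x2 (m_p m p)) \/
  in_p m p (pw x2 (m_p m p)) (pw x1 (m_p m p)).

Definition dId5 (m : nat) : Prop :=
  forall x1 x2, dom x1 -> dom x2 ->
  pw x1 m = one \/ pw x2 m = one \/ pw (mul x1 x2) m = one.

Definition allIds (m : nat) : Prop :=
  [/\ dId1 m, dId2, dId3 m,
      (forall p, prime p -> p %| m -> dId4 m p) & dId5 m].
End Identities.

Definition holds_in_fingroup (gT : finGroupType) (D : {set gT}) (m : nat) :=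
  allIds (fun x y : gT => (x * y)%g) 1%g (fun x => x \in D) m.

Definition holds_in_group (G : AbsGroup) (m : nat) :=
  allIds (@gmul G) (@gone G) (fun _ => True) m.

Definition iso_to_quotient (G : AbsGroup) (gT : finGroupType) (H K : {group gT}) :=
  exists f : G -> coset_of K,
    [/\ forall a b, f (gmul a b) = (f a * f b)%g,
        injective f &
        forall y, y \in (H / K)%g <-> exists g, f g = y].

Definition is_section_of (G : AbsGroup) (gT : finGroupType) (D : {set gT}) :=
  exists (H K : {group gT}), [/\ H \subset D, (K <| H)%g & iso_to_quotient G H K].

(* Every element of D_2m is either a rotation, in the cyclic group <a> of
   exponent m, or a reflection, of order 2; a product of two reflections is a
   rotation.  This gives identities (2)-(5), and |D_2m| = 2m gives (1).
   Conversely, (1) bounds the size of a group G by 2m, so G embeds in a finite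
   symmetric group.  As m is odd, (2) makes the elements x with x^m = 1 commute,
   so they form an abelian subgroup N; by (4) the cyclic subgroups of a Sylow
   subgroup of N form a chain, so N is cyclic.  By (3) the elements outside N
   are involutions and by (5) the product of two of them lies in N.  Hence
   either G = N is cyclic of order dividing m, a quotient of <a>, or G = N<t> is
   generated by g, t with g^m = t^2 = 1 and g^t = g^-1, a quotient of D_2m. *)

From mathcomp Require Import all_boot fingroup morphism quotient presentation.
From mathcomp Require Import perm cyclic pgroup nilpotent sylow extremal.
From Stdlib Require Import ClassicalEpsilon.
Set Implicit Arguments. Unset Strict Implicit. Unset Printing Implicit Defensive.
Local Open Scope group_scope.

Section Morphisms.
Variables (T T' : Type) (mul : T -> T -> T) (one : T) (dom : T -> Prop).
Variables (mul' : T' -> T' -> T') (one' : T') (dom' : T' -> Prop) (f : T -> T').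
Hypotheses (fM : forall x y, f (mul x y) = mul' (f x) (f y)) (f1 : f one = one').
Hypothesis f_onto : forall z, dom' z -> exists2 x, dom x & f x = z.

Lemma pw_morph x n : f (pw mul one x n) = pw mul' one' (f x) n.
Proof. by elim: n => //= n IHn; rewrite fM IHn. Qed.

Lemma allIds_morph m : allIds mul one dom m -> allIds mul' one' dom' m.
Proof.
case=> I1 I2 I3 I4 I5; split.
- move=> zs dom_zs.
  pose xs i := epsilon (inhabits one) (fun x => dom x /\ f x = zs i).
  have xsP i : i <= m.*2 -> dom (xs i) /\ f (xs i) = zs i.
    move=> le_i; apply: (epsilon_spec (inhabits one) (fun x => dom x /\ f x = zs i)).
    by have [x ? ?] := f_onto (dom_zs i le_i); exists x.
  have [i [j [lt_ij [le_j eq_ij]]]] := I1 xs (fun i le_i => proj1 (xsP i le_i)).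
  have le_i : i <= m.*2 by rewrite (leq_trans (ltnW lt_ij)).
  exists i, j; split=> //.
  by rewrite -(proj2 (xsP i le_i)) -(proj2 (xsP j le_j)) eq_ij.
- move=> _ _ /f_onto[x Dx <-] /f_onto[y Dy <-]; rewrite -!pw_morph -fM.
  by case: (I2 x y Dx Dy) => [->|[->|->]]; auto.
- move=> _ /f_onto[x Dx <-]; rewrite -!pw_morph.
  by case: (I3 x Dx) => ->; auto.
- move=> p p_pr p_m _ _ /f_onto[x Dx <-] /f_onto[y Dy <-]; rewrite /in_p -!pw_morph.
  case: (I4 p p_pr p_m x y Dx Dy) => [->|[->|[[j [lt_j ->]]|[j [lt_j ->]]]]]; auto.
    by do 2 right; left; exists j; rewrite -pw_morph.
  by do 3 right; exists j; rewrite -pw_morph.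
- move=> _ _ /f_onto[x Dx <-] /f_onto[y Dy <-]; rewrite -fM -!pw_morph.
  by case: (I5 x y Dx Dy) => [->|[->|->]]; auto.
Qed.

End Morphisms.

Lemma pwE (gT : finGroupType) (x : gT) n : pw (fun x y : gT => x * y) 1 x n = x ^+ n.
Proof. by elim: n => //= n ->; rewrite expgS. Qed.

Lemma dId1_card (gT : finGroupType) (S : {set gT}) m :
  #|S| <= m.*2 -> dId1 (fun x => x \in S) m.
Proof.
move=> card_S xs Sxs; pose ys (i : 'I_m.*2.+1) := xs i.
have /injectivePn[i [j neq_ij eq_ij]] : ~~ injectiveb ys.
  apply: contraTN card_S => /injectiveP inj_ys; rewrite -ltnNge.
  rewrite -[X in X <= _](card_ord m.*2.+1) -(card_imset _ inj_ys) subset_leq_card //.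
  by apply/subsetP => _ /imsetP[k _ ->]; apply: Sxs; rewrite -ltnS.
case: (ltngtP i j) => [lt_ij|lt_ji|/val_inj eq]; last by rewrite eq eqxx in neq_ij.
- by exists i, j; split; rewrite // -ltnS ltn_ord.
- by exists j, i; split; rewrite // -ltnS ltn_ord.
Qed.

Lemma cyclic_pfactor_total (gT : finGroupType) (A : {group gT}) p k u v :
    cyclic A -> prime p -> u \in A -> v \in A -> #[u] %| p ^ k -> #[v] %| p ^ k ->
  (exists j, j < p ^ k /\ u = v ^+ j) \/ (exists j, j < p ^ k /\ v = u ^+ j).
Proof.
move=> cycA p_pr Au Av oU oV.
have in_cycle x y : x \in A -> y \in A -> #[x] %| #[y] -> #[y] %| p ^ k ->
    exists j, j < p ^ k /\ x = y ^+ j.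
  move=> Ax Ay oXY oY.
  have /cyclePmin[j lt_j ->] : x \in <[y]>.
    by rewrite -cycle_subG -(cardSg_cyclic cycA) ?cycle_subG.
  by exists j; rewrite (leq_trans lt_j) // dvdn_leq ?expn_gt0 ?prime_gt0.
have [i _ oUi] := dvdn_pfactor _ _ p_pr oU.
have [j _ oVj] := dvdn_pfactor _ _ p_pr oV.
have [le_ij|/ltnW le_ji] := leqP i j; [left|right]; apply: in_cycle => //;
  by rewrite oUi oVj dvdn_exp2l.
Qed.

Lemma dihedral_gens m (gT : finGroupType) (D : {group gT}) :
    D \isog Grp (a : b : (a ^+ m, b ^+ 2, a ^ b = a^-1)) ->
  exists a b, [/\ <[a]> <*> <[b]> = D, a ^+ m = 1, b ^+ 2 = 1 & a ^ b = a^-1].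
Proof.
move/isoGrp_hom=> /existsP[[a b]] /=; rewrite !xpair_eqE /=.
by case/and4P=> /eqP defD /eqP am /eqP b2 /eqP ab; exists a, b.
Qed.

Section DihedralGenerators.
Variables (m : nat) (gT : finGroupType) (D : {group gT}) (a b : gT).
Hypotheses (defD : <[a]> <*> <[b]> = D) (am : a ^+ m = 1) (b2 : b ^+ 2 = 1).
Hypothesis ab : a ^ b = a^-1.

Lemma invg_b : b^-1 = b.
Proof. by apply/eqP; rewrite eq_invg_mul -expg2 b2. Qed.

Lemma conjg_b u : u \in <[a]> -> u ^ b = u^-1.
Proof. by case/cycleP=> i ->; rewrite conjXg ab expgVn. Qed.

Lemma dihedral_mulg : D :=: <[a]> * <[b]>.
Proof.
rewrite -defD norm_joinEr // cycle_subG; apply/normP.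
by rewrite -cycleJ ab cycleV.
Qed.

Lemma dihedral_memP x :
  x \in D -> x \in <[a]> \/ exists2 u, u \in <[a]> & x = u * b.
Proof.
rewrite dihedral_mulg => /mulsgP[u v Au /cyclePmin[i lt_i ->] ->].
have le_b2 : #[b] <= 2 by rewrite dvdn_leq // order_dvdn b2.
case: i lt_i => [|[|i]] lt_i; first by left; rewrite mulg1.
  by right; exists u; rewrite ?expg1.
by have := leq_trans lt_i le_b2.
Qed.

Lemma reflection_expg2 u : u \in <[a]> -> (u * b) ^+ 2 = 1.
Proof.
by move=> Au; rewrite expg2 -mulgA -{1}invg_b -conjgE conjg_b ?mulgV.
Qed.

Lemma mul_reflections u w : u \in <[a]> -> w \in <[a]> -> (u * b) * (w * b) \in <[a]>.
Proof.
move=> Au Aw; rewrite -mulgA -{1}invg_b -conjgE.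
by rewrite groupM ?conjg_b ?groupV.
Qed.

Lemma expg_cycle_m u : u \in <[a]> -> u ^+ m = 1.
Proof. by case/cycleP=> i ->; rewrite -expgM mulnC expgM am expg1n. Qed.

Lemma card_dihedral_le : #|D| <= #[a].*2.
Proof.
rewrite dihedral_mulg -muln2.
rewrite (leq_trans (dvdn_leq _ (dvdn_cardMg _ _))) ?muln_gt0 ?cardG_gt0 //.
by rewrite -!orderE leq_mul // dvdn_leq // order_dvdn b2.
Qed.

Lemma order_dvd_m : #[a] %| m.
Proof. by rewrite order_dvdn am. Qed.

Lemma dihedral_elt x : x \in D -> x \in <[a]> \/ x ^+ 2 = 1.
Proof. by case/dihedral_memP=> [|[u Au ->]]; [left | right; rewrite reflection_expg2]. Qed.

Lemma dihedral_identities : 0 < m -> holds_in_fingroup D m.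
Proof.
move=> m_gt0; split.
- apply: dId1_card; rewrite (leq_trans card_dihedral_le) // leq_double.
  exact: dvdn_leq order_dvd_m.
- move=> x y Dx Dy; rewrite !pwE.
  case: (dihedral_elt Dx) => [Ax|]; last by left.
  case: (dihedral_elt Dy) => [Ay|]; last by right; left.
  by do 2 right; apply: (centsP (cycle_abelian a)).
- move=> x Dx; rewrite !pwE.
  by case: (dihedral_elt Dx) => [/expg_cycle_m|]; [right | left].
- move=> p p_pr _ x y Dx Dy; rewrite /in_p /m_p !pwE.
  case: (dihedral_elt Dx) => [Ax|]; last by left.
  case: (dihedral_elt Dy) => [Ay|]; last by right; left.
  set k := logn p m; have mE : (m %/ p ^ k * p ^ k)%N = m by rewrite divnK ?pfactor_dvdnn.
  have oX z : z \in <[a]> -> #[z ^+ (m %/ p ^ k)] %| p ^ k.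
    by move=> Az; rewrite order_dvdn -expgM mE expg_cycle_m.
  do 2 right; case: (cyclic_pfactor_total (cycle_cyclic a) p_pr
    (groupX _ Ax) (groupX _ Ay) (oX x Ax) (oX y Ay)) => [][j [lt_j ->]];
    [left | right]; by exists j; rewrite pwE.
- move=> x y Dx Dy; rewrite !pwE.
  case: (dihedral_memP Dx) => [/expg_cycle_m|[u Au ->]]; first by left.
  case: (dihedral_memP Dy) => [/expg_cycle_m|[w Aw ->]]; first by right; left.
  by do 2 right; rewrite expg_cycle_m ?mul_reflections.
Qed.

Lemma order_dihedral_generator :
  0 < m -> D \isog Grp (x : y : (x ^+ m, y ^+ 2, x ^ y = x^-1)) -> #[a] = m.
Proof.
move=> m_gt0 isoD; apply/eqP; rewrite eqn_leq dvdn_leq ?order_dvd_m //=.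
have [le_m1|m_gt1] := leqP m 1; first by rewrite (leq_trans le_m1) ?order_gt0.
(* The presentation does not collapse: 'D_(2m) is a quotient of D. *)
have : [set: 'D_m.*2]%G \homg D by rewrite isoD; apply: isoGrp_hom (Grp_dihedral m_gt1).
move/card_homg/dvdn_leq; rewrite cardG_gt0 card_dihedral // => /(_ isT) le_D.
by rewrite -leq_double (leq_trans le_D) ?card_dihedral_le.
Qed.

End DihedralGenerators.

Lemma cyclic_of_total_cycles (gT : finGroupType) (G : {group gT}) :
  {in G &, forall x y, x \in <[y]> \/ y \in <[x]>} -> cyclic G.
Proof.
move=> tot; have [x Gx max_x] := @arg_maxnP _ 1 (mem G) (fun z => #[z]) (group1 G).
apply: (cyclicS (G := <[x]>%G)) (cycle_cyclic x); apply/subsetP=> y Gy.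
case: (tot y x Gy Gx) => // x_y.
suff eq_xy : <[x]> = <[y]> by rewrite /= eq_xy cycle_id.
by apply/eqP; rewrite eqEcard cycle_subG x_y -!orderE; apply: max_x.
Qed.

Lemma p'nat_m_p m (p : nat) : 0 < m -> p^'.-nat (m_p m p).
Proof.
move=> m_gt0; rewrite /m_p -p_part -{1}(partnC p m_gt0) mulKn ?part_gt0 //.
exact: part_pnat.
Qed.

Section IdentityStructure.
Variables (m : nat) (gT : finGroupType) (G : {group gT}).
Hypotheses (m_gt0 : 0 < m) (m_odd : odd m) (idsG : holds_in_fingroup G m).

Lemma expg_odd_involution (x : gT) : x ^+ m = 1 -> x ^+ 2 = 1 -> x = 1.
Proof.
move=> xm x2; rewrite -xm -(odd_double_half m) m_odd -mul2n expgD expgM x2.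
by rewrite expg1n mulg1.
Qed.

Definition torsion := [set x in G | x ^+ m == 1].

Lemma torsionP x : reflect (x \in G /\ x ^+ m = 1) (x \in torsion).
Proof. by rewrite inE; apply: (iffP andP) => [][-> /eqP]. Qed.

Lemma torsion_commute x y : x \in torsion -> y \in torsion -> commute x y.
Proof.
case/torsionP=> Gx xm /torsionP[Gy ym]; have [_ I2 _ _ _] := idsG.
move: (I2 x y Gx Gy); rewrite !pwE; case=> [x2|[y2|//]].
- by rewrite (expg_odd_involution xm x2); apply/commute_sym/commute1.
- by rewrite (expg_odd_involution ym y2); apply: commute1.
Qed.

Lemma group_set_torsion : group_set torsion.
Proof.
apply/group_setP; split=> [|x y Tx Ty]; first by apply/torsionP; rewrite expg1n.
have cxy := torsion_commute Tx Ty.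
case/torsionP: Tx => Gx xm; case/torsionP: Ty => Gy ym.
by apply/torsionP; rewrite groupM // expgMn // xm ym mulg1.
Qed.

Canonical torsion_group := Group group_set_torsion.

Lemma torsion_sub : torsion \subset G.
Proof. by apply/subsetP=> x /torsionP[]. Qed.

Lemma abelian_torsion : abelian torsion.
Proof. by apply/centsP=> x Tx y Ty; apply: torsion_commute. Qed.

Lemma torsion_pelt_total p x y : prime p -> p.-elt x -> p.-elt y ->
  x \in torsion -> y \in torsion -> x \in <[y]> \/ y \in <[x]>.
Proof.
move=> p_pr p_x p_y /torsionP[Gx xm] /torsionP[Gy ym].
have [p_m|p'm] := boolP (p %| m); last first.
  left; suff -> : x = 1 by apply: group1.
  apply/eqP; rewrite -order_eq1; apply/eqP/(pnat_1 p_x).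
  by apply: pnat_dvd (_ : p^'.-nat m); rewrite ?order_dvdn ?xm ?p'natE.
(* m_p is prime to p, so a p-element z lies in <[z ^+ m_p]>. *)
have mem_cycle_mp (z : gT) : p.-elt z -> z \in <[z ^+ m_p m p]>.
  move=> p_z; have /eqP <- : generator <[z]> (z ^+ m_p m p) by rewrite
    generator_coprime (pnat_coprime p_z) ?p'nat_m_p.
  exact: cycle_id.
have [_ _ _ I4 _] := idsG; move: (I4 p p_pr p_m x y Gx Gy); rewrite /in_p !pwE.
case=> [x2|[y2|[][j [_ xmp]]]].
- by left; rewrite (expg_odd_involution xm x2) group1.
- by right; rewrite (expg_odd_involution ym y2) group1.
- have : <[x ^+ m_p m p]> \subset <[y]> by rewrite cycle_subG xmp pwE !groupX ?cycle_id.
  by move/subsetP/(_ x (mem_cycle_mp x p_x)); left.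
- have : <[y ^+ m_p m p]> \subset <[x]> by rewrite cycle_subG xmp pwE !groupX ?cycle_id.
  by move/subsetP/(_ y (mem_cycle_mp y p_y)); right.
Qed.

Lemma cyclic_torsion : cyclic torsion.
Proof.
apply: nil_Zgroup_cyclic (abelian_nil abelian_torsion).
apply/forall_inP=> V /SylowP[p p_pr sylV].
have [sVT pV _] := and3P sylV.
apply: cyclic_of_total_cycles => x y Vx Vy.
by apply: (torsion_pelt_total p_pr); rewrite ?(mem_p_elt pV) ?(subsetP sVT).
Qed.

Lemma nontorsion_involution x : x \in G -> x \notin torsion -> x ^+ 2 = 1.
Proof.
move=> Gx T'x; have [_ _ I3 _ _] := idsG.
by move: (I3 x Gx); rewrite !pwE => -[// | xm]; case/torsionP: T'x.
Qed.

Lemma mul_nontorsion x y :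
  x \in G -> y \in G -> x \notin torsion -> y \notin torsion -> x * y \in torsion.
Proof.
move=> Gx Gy /torsionP T'x /torsionP T'y; have [_ _ _ _ I5] := idsG.
move: (I5 x y Gx Gy); rewrite !pwE => -[xm|[ym|xym]]; first by case: T'x.
  by case: T'y.
by apply/torsionP; rewrite groupM.
Qed.

Lemma torsion_structure :
  (exists g, G :=: <[g]> /\ g ^+ m = 1) \/
  (exists g t, [/\ <[g]> <*> <[t]> = G, g ^+ m = 1, t ^+ 2 = 1 & g ^ t = g^-1]).
Proof.
have /cyclicP[g defT] := cyclic_torsion.
have Tg : g \in torsion by rewrite defT cycle_id.
have /torsionP[Gg gm] := Tg.
have [sGT|/subsetPn[t Gt T't]] := boolP (G \subset torsion).
  by left; exists g; split=> //; apply/eqP; rewrite -defT eqEsubset sGT torsion_sub.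
have t2 := nontorsion_involution Gt T't.
have tV : t^-1 = t by apply/eqP; rewrite eq_invg_mul -expg2 t2.
right; exists g, t; split=> //.
  apply/eqP; rewrite eqEsubset join_subG !cycle_subG Gg Gt andbT.
  apply/subsetP=> x Gx; have sTgt : torsion \subset <[g]> <*> <[t]>.
    by rewrite defT joing_subl.
  have [Tx|T'x] := boolP (x \in torsion); first exact: subsetP sTgt x Tx.
  rewrite -(mulgK t x) tV; apply: groupM.
    by rewrite (subsetP sTgt) ?mul_nontorsion.
  by rewrite mem_gen ?inE ?cycle_id ?orbT.
have T'gt : g * t \notin torsion.
  by apply: contra T't => Tgt; rewrite -(mulKg g t) groupM ?groupV.
rewrite conjgE tV; apply/esym/eqP; rewrite eq_invg_mul mulgA -expg2.
by rewrite (nontorsion_involution (groupM Gg Gt) T'gt) eqxx.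
Qed.

End IdentityStructure.

Lemma identities_homg_subgroup m (gT hT : finGroupType) (D : {group gT}) (G : {group hT}) :
    0 < m -> odd m -> D \isog Grp (a : b : (a ^+ m, b ^+ 2, a ^ b = a^-1)) ->
  holds_in_fingroup G m -> exists2 H : {group gT}, H \subset D & G \homg H.
Proof.
move=> m_gt0 m_odd isoD idsG; have [a [b [defD am b2 ab]]] := dihedral_gens isoD.
case: (torsion_structure m_gt0 m_odd idsG) => [[g [defG gm]]|[g [t [defG gm t2 gt]]]].
  have oa := order_dihedral_generator defD am b2 ab m_gt0 isoD.
  have dvd_ga : #[g] %| #[a] by rewrite oa order_dvdn gm.
  exists <[a]>%G; first by rewrite -defD joing_subl.
  by apply/homgP; exists [morphism of eltm dvd_ga]; rewrite im_eltm defG.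
exists D => //; rewrite isoD; apply/existsP; exists (g, t).
by rewrite /= !xpair_eqE /= defG gm t2 gt !eqxx.
Qed.

Definition enumerates (G : AbsGroup) n (xs : nat -> G) :=
  (forall i j, i < n -> j < n -> xs i = xs j -> i = j) /\
  (forall y, exists2 i, i < n & xs i = y).

Lemma dId1_enumeration (G : AbsGroup) m :
  dId1 (fun _ : G => True) m -> exists n (xs : nat -> G), enumerates n xs.
Proof.
move=> I1.
suff extend d k (xs : nat -> G) : m.*2.+1 - k <= d ->
    (forall i j, i < k -> j < k -> xs i = xs j -> i = j) ->
    exists n (ys : nat -> G), enumerates n ys.
  by apply: (extend m.*2.+1 0 (fun _ => gone G)); rewrite ?subn0.
elim: d k xs => [|d IHd] k xs le_d inj_xs.
  have [i [j [lt_ij [le_j eq_ij]]]] := I1 xs (fun _ _ => I).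
  have le_mk : m.*2.+1 <= k by rewrite -subn_eq0 -leqn0.
  have lt_jk : j < k by apply: leq_trans le_mk; rewrite ltnS.
  have eq_ij' := inj_xs i j (ltn_trans lt_ij lt_jk) lt_jk eq_ij.
  by rewrite eq_ij' ltnn in lt_ij.
have [onto|] := classic (forall y, exists2 i, i < k & xs i = y).
  by exists k, xs.
case/not_all_ex_not=> y not_xs_y.
apply: (IHd k.+1 (fun i => if i == k then y else xs i)).
  by rewrite subnS -subn1 leq_subLR add1n.
move=> i j; rewrite !ltnS.
case: (eqVneq i k) => [->|ne_ik]; case: (eqVneq j k) => [->|ne_jk] // le_ik le_jk.
- by move=> eq_y; case: not_xs_y; exists j; rewrite // ltn_neqAle ne_jk.
- by move/esym=> eq_y; case: not_xs_y; exists i; rewrite // ltn_neqAle ne_ik.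
- by apply: inj_xs; rewrite ltn_neqAle ?ne_ik ?ne_jk.
Qed.

Section Cayley.
Variables (G : AbsGroup) (n : nat) (xs : nat -> G).
Hypothesis enum_xs : enumerates n xs.

Lemma enumerates_ord y : exists i : 'I_n, xs i = y.
Proof. by have [i lt_in <-] := enum_xs.2 y; exists (Ordinal lt_in). Qed.

Definition enum_index y : 'I_n :=
  proj1_sig (constructive_indefinite_description _ (enumerates_ord y)).

Lemma enum_indexK y : xs (enum_index y) = y.
Proof. exact: proj2_sig (constructive_indefinite_description _ (enumerates_ord y)). Qed.

Lemma enumerates_ord_inj : injective (fun i : 'I_n => xs i).
Proof. by move=> i j eq_ij; apply/val_inj/enum_xs.1; rewrite ?ltn_ord. Qed.

Lemma enum_index_ord (i : 'I_n) : enum_index (xs i) = i.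
Proof. by apply: enumerates_ord_inj; rewrite /= enum_indexK. Qed.

Lemma gmulIr (a b g : G) : gmul a g = gmul b g -> a = b.
Proof. by move=> eq_ab; rewrite -(gmul1 a) -(gmul1 b) -(gmulV g) !gmulA eq_ab. Qed.

Lemma cayley_inj_subproof g : injective (fun i : 'I_n => enum_index (gmul (xs i) g)).
Proof.
move=> i j /(congr1 (fun k : 'I_n => xs k)); rewrite !enum_indexK => /gmulIr.
exact: enumerates_ord_inj.
Qed.

Definition cayley g : {perm 'I_n} := perm (@cayley_inj_subproof g).

Lemma cayleyE g i : xs (cayley g i) = gmul (xs i) g.
Proof. by rewrite permE enum_indexK. Qed.

Lemma cayleyM a b : cayley (gmul a b) = cayley a * cayley b.
Proof.
by apply/permP=> i; apply: enumerates_ord_inj; rewrite /= permM !cayleyE gmulA.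
Qed.

Lemma cayley1 : cayley (gone G) = 1.
Proof.
by apply/permP=> i; apply: enumerates_ord_inj; rewrite /= cayleyE perm1 gmul1.
Qed.

Lemma cayley_inj : injective cayley.
Proof.
move=> a b /(congr1 (fun s : {perm 'I_n} => xs (s (enum_index (gone G))))).
by rewrite !cayleyE !enum_indexK !g1mul.
Qed.

Definition cayley_group := [set cayley (xs i) | i : 'I_n].

Lemma mem_cayley_group z : z \in cayley_group <-> exists g, cayley g = z.
Proof.
split=> [/imsetP[i _ ->]|[g <-]]; first by exists (xs i).
by apply/imsetP; exists (enum_index g); rewrite ?enum_indexK.
Qed.

Lemma group_set_cayley : group_set cayley_group.
Proof.
apply/group_setP; split; first by apply/mem_cayley_group; exists (gone G); rewrite cayley1.
move=> _ _ /mem_cayley_group[a <-] /mem_cayley_group[b <-].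
by apply/mem_cayley_group; exists (gmul a b); rewrite cayleyM.
Qed.

Canonical cayley_group_group := Group group_set_cayley.

End Cayley.

Lemma is_section_of_homg (G : AbsGroup) (hT gT : finGroupType) (f : G -> hT)
    (S : {group hT}) (H D : {group gT}) :
    (forall a b, f (gmul a b) = f a * f b) -> injective f ->
    (forall z, z \in S <-> exists g, f g = z) ->
  S \homg H -> H \subset D -> is_section_of G D.
Proof.
move=> fM inj_f memS /homgP[h imh] sHD; have Sf g : f g \in S by apply/memS; exists g.
have /isogP[phi inj_phi im_phi] : S \isog H / 'ker h by rewrite -imh isog_sym first_isog.
exists H, ('ker h)%G; split=> //; first exact: ker_normal.
exists (fun g => phi (f g)); split.
- by move=> a b; rewrite fM morphM ?Sf.
- by move=> a b /(injmP inj_phi) eq_ab; apply/inj_f/eq_ab; rewrite Sf.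
- move=> y; rewrite -im_phi; split=> [/morphimP[_ _ /memS[g <-] ->]|[g <-]].
    by exists g.
  exact: mem_morphim.
Qed.

Theorem mainTheorem5 (m : nat) (gT : finGroupType) (D : {group gT}) :
  0 < m -> odd m ->
  (D \isog Grp (a : b : (a ^+ m, b ^+ 2, a ^ b = a^-1)))%g ->
  holds_in_fingroup D m /\
  (forall G : AbsGroup, holds_in_group G m -> is_section_of G D).
Proof.
move=> m_gt0 m_odd isoD; split.
  have [a [b [defD am b2 ab]]] := dihedral_gens isoD.
  exact: dihedral_identities defD am b2 ab m_gt0.
move=> G idsG; have [I1 _ _ _ _] := idsG.
have [n [xs enum_xs]] := dId1_enumeration I1.
have onto z : z \in cayley_group enum_xs -> exists2 g : G, True & cayley enum_xs g = z.
  by case/mem_cayley_group=> g <-; exists g.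
have idsS := allIds_morph (cayleyM enum_xs) (cayley1 enum_xs) onto idsG.
have [H sHD homSH] := identities_homg_subgroup m_gt0 m_odd isoD idsS.
exact: is_section_of_homg (cayleyM enum_xs) (@cayley_inj _ _ _ enum_xs)
  (mem_cayley_group enum_xs) homSH sHD.
Qed.
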